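(* Let $X\neq\emptyset$ be countable, $F=(F_x)_{x\in X}$ a family of finite-dimensional complex vector spaces, and $A\colon\Gamma(X;F)\to\Gamma(X;F)$ a continuous linear operator whose dual operator $A'\colon\Gamma_c(X;F')\to\Gamma_c(X;F')$ is injective. Then for every finite nonempty $K\subseteq X$ there exist $\varepsilon>0$ and a finite nonempty $K'\subseteq X$ such that $\overline{A(U_K)}\supseteq\varepsilon U_{K'}$, where the closure is taken in $\Gamma(X;F)$.
   Context: $\Gamma(X;F)=\prod_x F_x$ carries the product topology, i.e. the topology generated by seminorms $p_K(f)=\sum_{x\in K}\|f(x)\|_x$ for finite $K\subseteq X$, with $\|\cdot\|_x$ a fixed norm on $F_x$. $U_K:=\{f\in\Gamma(X;F)\mid p_K(f)\le1\}$. $\Gamma_c(X;F')$ is the space of finitely supported sections of the dual bundle $F'=(F'_x)$, identified with the continuous dual of $\Gamma(X;F)$ via $(\varphi,f)=\sum_x\varphi(x)(f(x))$; the dual operator is defined by $(A'\varphi,f)=(\varphi,Af)$. *)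

From HB Require Import structures.
From mathcomp Require Import all_boot all_order all_algebra.
From mathcomp Require Import finmap.
From mathcomp Require Import boolp classical_sets fsbigop reals.
From mathcomp Require Import complex.
Set Implicit Arguments. Unset Strict Implicit. Unset Printing Implicit Defensive.
Import Order.TTheory GRing.Theory Num.Theory.
Local Open Scope ring_scope.
Local Open Scope classical_set_scope.

Section Sections.
Variables (R : realType) (X : countType) (n : X -> nat).

(* Γ(X;F) with F_x = C^(n x) (every fin.-dim complex space is of this form). *)
Definition sec := forall x : X, 'rV[R[i]]_(n x).

Definition sec_add (f g : sec) : sec := fun x => f x + g x.
Definition sec_sub (f g : sec) : sec := fun x => f x - g x.
Definition sec_scale (a : R[i]) (f : sec) : sec := fun x => a *: f x.

Definition sec_linear (A : sec -> sec) : Prop :=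
  forall (a : R[i]) (f g : sec), A (sec_add (sec_scale a f) g) = sec_add (sec_scale a (A f)) (A g).

Definition is_norm (m : nat) (N : 'rV[R[i]]_m -> R) : Prop :=
  [/\ forall v w, N (v + w) <= N v + N w,
      forall (a : R[i]) v, N (a *: v) = Normc.normc a * N v
    & forall v, N v = 0 -> v = 0].

Variable nrm : forall x : X, 'rV[R[i]]_(n x) -> R.

Definition pK (K : {fset X}) (f : sec) : R := \sum_(x <- K) nrm (f x).

Definition U (K : {fset X}) : set sec := [set f | pK K f <= 1].

Definition sec_open (O : set sec) : Prop :=
  forall f, O f -> exists (K : {fset X}) (d : R), 0 < d /\
    (forall g, pK K (sec_sub g f) < d -> O g).

Definition sec_closure (S : set sec) : set sec :=
  [set g | forall O, sec_open O -> O g -> exists h, S h /\ O h].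

Definition sec_continuous (A : sec -> sec) : Prop :=
  forall O, sec_open O -> sec_open (A @^-1` O).

Definition sec_rscale (eps : R) (S : set sec) : set sec :=
  [set g | exists2 f, S f & g = sec_scale (real_complex R eps) f].

(* Γ_c(X;F'): finitely supported sections of the dual bundle; the dual
   F'_x of C^(n x) is identified with C^(n x) via v |-> (w |-> Σ_i v_i w_i). *)
Definition dual_pair (m : nat) (phi v : 'rV[R[i]]_m) : R[i] :=
  \sum_(i < m) phi 0 i * v 0 i.

Definition Gc : set sec :=
  [set phi | exists K : {fset X}, forall x, x \notin K -> phi x = 0].

Definition pairing (phi f : sec) : R[i] :=
  (\sum_(x \in [set: X]) dual_pair (phi x) (f x))%R.

End Sections.

From HB Require Import structures.
From mathcomp Require Import all_boot all_order all_algebra.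
From mathcomp Require Import finmap.
From mathcomp Require Import boolp classical_sets fsbigop reals.
From mathcomp Require Import complex.
From mathcomp Require Import topology normedtype derive.
From mathcomp Require Import lra.

(* The duality (A' phi, f) = (phi, A f) reduces the statement to linear
   algebra in finitely many coordinates.  Let W be the space of finitely
   supported phi such that A' phi is supported in K.  As A' is injective,
   phi |-> (A' phi)|_K embeds W into the K-coordinates, so W is finite
   dimensional; K' is chosen to contain the supports of a basis of W.  For f
   in U_K', the functional A' phi |-> eps (phi, f) on A'(W) is represented by
   a section f0 supported in K, with p_K(f0) <= 1 for eps small by the
   equivalence of norms in finite dimension.  Given a basic neighbourhood
   {g | p_L(g - eps f) < d} of eps f, the section eps f - A f0 is annihilated
   by every phi supported in L with A' phi supported in K, so finite
   dimensional duality gives z vanishing on K with A z = eps f - A f0 on L.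
   Then f0 + z lies in U_K and A (f0 + z) agrees with eps f on L. *)

Set Implicit Arguments.
Unset Strict Implicit.
Unset Printing Implicit Defensive.
Import Order.TTheory GRing.Theory Num.Theory.
Import numFieldTopology.Exports numFieldNormedType.Exports.
Local Open Scope ring_scope.
Local Open Scope classical_set_scope.

Lemma ler_mx_norm_entry (R : realDomainType) k (w : 'rV[R]_k) j : `|w 0 j| <= `|w|.
Proof.
have /mapP[i _ ->] : `|w 0 j| \in [seq `|w x.1 x.2| | x : 'I_1 * 'I_k].
  by apply/mapP; exists (0, j) => //=; rewrite mem_enum.
by rewrite [leRHS]/Num.Def.normr /= mx_normrE; apply/bigmax_geP; right; exists i.
Qed.

Section RealRowNorm.
Variables (R : realType) (k : nat) (g : 'rV[R]_k -> R).
Hypotheses (gD : forall v w, g (v + w) <= g v + g w)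
  (gZ : forall (r : R) v, g (r *: v) = `|r| * g v)
  (g_eq0 : forall v, g v = 0 -> v = 0).

Lemma rnorm0 : g 0 = 0.
Proof. by rewrite -(scale0r 0) gZ normr0 mul0r. Qed.

Lemma rnorm_ge0 v : 0 <= g v.
Proof.
have := gD v ((-1) *: v); rewrite gZ scaleN1r subrr rnorm0 normrN1 mul1r.
lra.
Qed.

Lemma rnorm_sum (I : Type) (r : seq I) (F : I -> 'rV[R]_k) :
  g (\sum_(i <- r) F i) <= \sum_(i <- r) g (F i).
Proof.
elim/big_rec2: _ => [|i w r' _ h]; first by rewrite rnorm0.
exact: le_trans (gD _ _) (lerD (lexx _) h).
Qed.

Lemma rnorm_le_mx_norm v : g v <= (\sum_j g (delta_mx 0 j)) * `|v|.
Proof.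
rewrite {1}(row_sum_delta v) mulr_suml; apply: le_trans (rnorm_sum _ _) _.
apply: ler_sum => j _; rewrite gZ mulrC; apply: ler_wpM2l; first exact: rnorm_ge0.
exact: ler_mx_norm_entry.
Qed.

Lemma rnorm_continuous : continuous g.
Proof.
set C := \sum_j g (delta_mx 0 j).
have C1 : 0 < C + 1 by rewrite ltr_wpDl // sumr_ge0 // => j _; apply: rnorm_ge0.
move=> v; apply/(@cvgrPdist_lt _ _ _ (nbhs v) (@nbhs_filter _ v)) => e e0.
apply/(@nbhs_normP R 'rV[R]_k).
exists (e / (C + 1)); first by rewrite /= divr_gt0.
move=> w /=; rewrite ltr_pdivlMr // => vw.
have lip : `|g v - g w| <= C * `|v - w|.
  have := gD (v - w) w; have := gD (w - v) v; rewrite !subrK.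
  have := rnorm_le_mx_norm (v - w); have := rnorm_le_mx_norm (w - v).
  rewrite -/C -opprB normrN ler_norml; lra.
apply: le_lt_trans lip (le_lt_trans _ vw).
by rewrite mulrC ler_wpM2l // lerDl.
Qed.

(* [g] attains a positive minimum on the compact unit sphere of the max norm. *)
Lemma mx_norm_le_rnorm : exists2 c, 0 < c & forall v, `|v| <= c * g v.
Proof.
pose S := [set w : 'rV[R]_k | `|w| = 1].
have unitS w : w != 0 -> S (`|w|^-1 *: w).
  by move=> w0; rewrite /S /= normrZ normfV normr_id mulVf ?normr_eq0.
have [[w0 Sw0]|S0] := pselect (S !=set0); last first.
  exists 1 => // v; rewrite mul1r; have [->|v0] := eqVneq v 0.
    by rewrite normr0 rnorm_ge0.
  by case: S0; exists (`|v|^-1 *: v); apply: unitS.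
have Scompact : compact S.
  apply: bounded_closed_compact.
    by apply: filterS (nbhs_pinfty_ge (num_real 1)) => M M1 w /= ->.
  have /continuous_closedP closed_preim := @norm_continuous R 'rV[R]_k.
  by apply: (closed_preim [set r | r = 1]); exact: closed_eq.
have [u /set_mem Su umin] := compact_EVT_min (ex_intro _ w0 Sw0) Scompact
  (continuous_subspaceT rnorm_continuous).
have gu : 0 < g u.
  rewrite lt_def rnorm_ge0 andbT; apply/eqP => /g_eq0 u0.
  by move: Su; rewrite /S /= u0 normr0 => /esym/eqP; rewrite oner_eq0.
exists (g u)^-1; first by rewrite invr_gt0.
move=> v; have [->|v0] := eqVneq v 0.
  by rewrite normr0 mulr_ge0 ?rnorm_ge0 // invr_ge0 ltW.
have := umin _ (mem_set (unitS v v0)); rewrite gZ normfV normr_id.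
rewrite ler_pdivlMl ?normr_gt0 // => h.
by rewrite mulrC ler_pdivlMr.
Qed.

End RealRowNorm.

Lemma normc_ge0 (R : rcfType) (z : R[i]) : 0 <= Normc.normc z.
Proof. by case: z => a b; apply: sqrtr_ge0. Qed.

Lemma normc_real (R : rcfType) (r : R) : Normc.normc r%:C%C = `|r|.
Proof. by rewrite /Normc.normc /= expr0n addr0 sqrtr_sqr. Qed.

Lemma normc_le_ReIm (R : rcfType) (a b : R) : Normc.normc (a +i* b)%C <= `|a| + `|b|.
Proof.
have le_sqr : a ^+ 2 + b ^+ 2 <= (`|a| + `|b|) ^+ 2.
  rewrite sqrrD !real_normK ?num_real //.
  have := mulr_ge0 (normr_ge0 a) (normr_ge0 b); lra.
by apply: le_trans (ler_wsqrtr le_sqr) _; rewrite sqrtr_sqr ger0_norm ?addr_ge0.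
Qed.

Section ComplexRowNorm.
Variables (R : realType) (m : nat) (N : 'rV[R[i]]_m -> R).
Hypothesis hN : is_norm N.

Definition complexify (w : 'rV[R]_(m + m)) : 'rV[R[i]]_m :=
  \row_j (w 0 (lshift m j) +i* w 0 (rshift m j))%C.

Definition realify (v : 'rV[R[i]]_m) : 'rV[R]_(m + m) :=
  row_mx (\row_j complex.Re (v 0 j)) (\row_j complex.Im (v 0 j)).

Lemma realifyK : cancel realify complexify.
Proof.
by move=> v; apply/rowP => j; rewrite mxE row_mxEl row_mxEr !mxE; case: (v 0 j).
Qed.

Let g w := N (complexify w).

Let gD v w : g (v + w) <= g v + g w.
Proof.
rewrite /g.
have -> : complexify (v + w) = complexify v + complexify w.
  by apply/rowP => j; rewrite !mxE.
by case: hN.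
Qed.

Let gZ (r : R) w : g (r *: w) = `|r| * g w.
Proof.
rewrite /g.
have -> : complexify (r *: w) = r%:C%C *: complexify w.
  apply/rowP => j; rewrite !mxE; apply/eqP.
  by rewrite eq_complex /= !mul0r subr0 addr0 !eqxx.
by case: hN => _ -> _; rewrite normc_real.
Qed.

Let g_eq0 w : g w = 0 -> w = 0.
Proof.
case: hN => _ _ N_eq0 /N_eq0 /rowP w0; apply/rowP => k; rewrite mxE.
by case: (split_ordP k) => j ->; have := w0 j; rewrite !mxE => -[].
Qed.

Lemma is_norm_ge0 v : 0 <= N v.
Proof. by rewrite -(realifyK v); apply: rnorm_ge0 gD gZ _. Qed.

Lemma is_norm0 : N 0 = 0.
Proof. by case: hN => _ N0 _; rewrite -(scale0r 0) N0 Normc.normc0 mul0r. Qed.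

(* Reduced to [mx_norm_le_rnorm] through the real coordinates C^m = R^(2m). *)
Lemma normc_le_is_norm :
  exists2 c : R, 0 < c & forall (v : 'rV[R[i]]_m) j, Normc.normc (v 0 j) <= c * N v.
Proof.
have [c c0 le_c] := mx_norm_le_rnorm gD gZ g_eq0.
exists (2 * c) => [|v j]; first by rewrite mulr_gt0.
have entry k : `|realify v 0 k| <= c * N v.
  by apply: le_trans (ler_mx_norm_entry _ k) _; rewrite -{2}(realifyK v); apply: le_c.
have := entry (lshift m j); have := entry (rshift m j).
rewrite row_mxEl row_mxEr !mxE.
have := normc_le_ReIm (complex.Re (v 0 j)) (complex.Im (v 0 j)).
case: (v 0 j) => a b /=; lra.
Qed.

End ComplexRowNorm.

Section SubspaceBasis.
Variables (F : fieldType) (m : nat) (V : 'rV[F]_m -> Prop).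
Hypotheses (V0 : V 0) (V_comb : forall a u v, V u -> V v -> V (a *: u + v)).

Lemma subspace_mulmx p (D : 'rV[F]_p) (M : 'M_(p, m)) :
  (forall i, V (row i M)) -> V (D *m M).
Proof.
move=> VM; rewrite mulmx_sum_row; elim/big_rec: _ => // i u _ Vu.
exact: V_comb.
Qed.

(* Take a free family of vectors of [V] of maximal size. *)
Lemma spanning_free_rows : exists p (M : 'M[F]_(p, m)),
  [/\ row_free M, forall i, V (row i M) & forall v, V v -> (v <= M)%MS].
Proof.
pose free_in k := `[< exists M : 'M[F]_(k, m), row_free M /\ forall i, V (row i M) >].
have free0 : free_in 0%N.
  by apply/asboolP; exists 0; split; [rewrite /row_free mxrank0 | case].
have free_le k : free_in k -> (k <= m)%N.
  by move=> /asboolP[M [freeM _]]; rewrite -(eqP freeM) rank_leq_col.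
have [k /asboolP[M [freeM VM]] kmax] := ex_maxnP (ex_intro free_in 0%N free0) free_le.
exists k, M; split => // v Vv; apply/negPn/negP => vM.
suff /kmax : free_in (k + 1)%N by rewrite addn1 ltnn.
apply/asboolP; exists (col_mx M v); split.
  have sub_Mv : (M <= col_mx M v)%MS by rewrite -addsmxE addsmxSl.
  have Mv_sub : ~~ (col_mx M v <= M)%MS by rewrite col_mx_sub negb_and vM orbT.
  have := ltn_leqif (mxrank_leqif_sup sub_Mv); rewrite Mv_sub (eqP freeM) => /= lt_k.
  by rewrite /row_free eqn_leq rank_leq_row /= [X in (X <= _)%N]addn1.
move=> i; case: (split_ordP i) => j ->; first by rewrite rowKu.
by rewrite rowKd row_id.
Qed.

Lemma subspace_annihilator (y : 'rV[F]_m) :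
  (forall c : 'cV[F]_m, (forall v, V v -> v *m c = 0) -> y *m c = 0) -> V y.
Proof.
move=> annih; have [p [M [_ VM spanV]]] := spanning_free_rows.
suff /submxP[D ->] : (y <= M)%MS by exact: subspace_mulmx.
rewrite submxE; apply/eqP/rowP => k.
have : y *m col k (cokermx M) = 0.
  apply: annih => v /spanV; rewrite submxE => /eqP vC.
  by rewrite colE mulmxA vC mul0mx.
by rewrite colE mulmxA -colE => /colP/(_ 0); rewrite !mxE.
Qed.

End SubspaceBasis.

Section InjectiveCoordinates.
Variables (F : fieldType) (U : lmodType F) (P : U -> Prop) (m : nat).
Variable T : U -> 'rV[F]_m.
Hypotheses (P0 : P 0) (P_comb : forall a u v, P u -> P v -> P (a *: u + v)).
Hypothesis T_comb : forall a u v, P u -> P v -> T (a *: u + v) = a *: T u + T v.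
Hypothesis T_inj : forall u v, P u -> P v -> T u = T v -> u = v.

Lemma inj_subspace_basis : exists p (z : 'I_p -> U) (M : 'M[F]_(p, m)),
  [/\ row_free M, forall i, P (z i) /\ T (z i) = row i M
    & forall u, P u -> exists d : 'rV_p, u = \sum_i d 0 i *: z i /\ T u = d *m M].
Proof.
have T0 : T 0 = 0 by have := T_comb (-1) P0 P0; rewrite scaler0 addr0 scaleN1r addNr.
pose V v := exists u, P u /\ T u = v.
have [p [M [freeM VM spanV]]] := spanning_free_rows V.
have [z Pz] := boolp.choice VM.
have comb (d : 'rV_p) : P (\sum_i d 0 i *: z i) /\ T (\sum_i d 0 i *: z i) = d *m M.
  rewrite mulmx_sum_row; elim/big_rec2: _ => [|i u t _ [Pu <-]]; first by [].
  by have [Pzi <-] := Pz i; split; [exact: P_comb | exact: T_comb].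
exists p, z, M; split => // u Pu.
have /submxP[d Td] := spanV _ (ex_intro _ u (conj Pu erefl)).
have [Pd Td'] := comb d; exists d; split => //.
by apply: T_inj => //; rewrite Td Td'.
Qed.

End InjectiveCoordinates.

Section SectionSpace.
Variables (R : realType) (X : countType) (n : X -> nat).
Local Notation sec := (sec R n).
Implicit Types (f g phi psi : sec) (S L : {fset X}).

Lemma dual_pairC m (u v : 'rV[R[i]]_m) : dual_pair u v = dual_pair v u.
Proof. by apply: eq_bigr => j _; rewrite mulrC. Qed.

Lemma dual_pairDl m a (u v w : 'rV[R[i]]_m) :
  dual_pair (a *: u + v) w = a * dual_pair u w + dual_pair v w.
Proof.
rewrite /dual_pair mulr_sumr -big_split; apply: eq_bigr => j _.
by rewrite !mxE mulrDl mulrA.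
Qed.

Lemma dual_pair0l m (v : 'rV[R[i]]_m) : dual_pair 0 v = 0.
Proof. by apply: big1 => j _; rewrite mxE mul0r. Qed.

Lemma dual_pairE m (u v : 'rV[R[i]]_m) : dual_pair u v = (u *m v^T) 0 0.
Proof. by rewrite mxE; apply: eq_bigr => j _; rewrite mxE. Qed.

HB.instance Definition _ := Choice.copy sec (forall x, 'rV[R[i]]_(n x)).

Let sec_addA : associative (@sec_add R X n).
Proof. by move=> f g h; apply: functional_extensionality_dep => x; apply: addrA. Qed.
Let sec_addC : commutative (@sec_add R X n).
Proof. by move=> f g; apply: functional_extensionality_dep => x; apply: addrC. Qed.
Let sec_add0 : left_id (fun x => 0) (@sec_add R X n).
Proof. by move=> f; apply: functional_extensionality_dep => x; apply: add0r. Qed.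
Let sec_addN : left_inverse (fun x => 0) (fun f x => - f x) (@sec_add R X n).
Proof. by move=> f; apply: functional_extensionality_dep => x; apply: addNr. Qed.

HB.instance Definition _ :=
  GRing.isZmodule.Build sec sec_addA sec_addC sec_add0 sec_addN.

Let sec_scaleA a b f : sec_scale a (sec_scale b f) = sec_scale (a * b) f.
Proof. by apply: functional_extensionality_dep => x; apply: scalerA. Qed.
Let sec_scale1 : left_id 1 (@sec_scale R X n).
Proof. by move=> f; apply: functional_extensionality_dep => x; apply: scale1r. Qed.
Let sec_scaleDr : right_distributive (@sec_scale R X n) +%R.
Proof. by move=> a f g; apply: functional_extensionality_dep => x; apply: scalerDr. Qed.
Let sec_scaleDl f : {morph (@sec_scale R X n)^~ f : a b / a + b}.
Proof. by move=> a b; apply: functional_extensionality_dep => x; apply: scalerDl. Qed.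

HB.instance Definition _ :=
  GRing.Zmodule_isLmodule.Build R[i] sec sec_scaleA sec_scale1 sec_scaleDr sec_scaleDl.

Lemma secDE f g x : (f + g) x = f x + g x. Proof. by []. Qed.
Lemma secZE a f x : (a *: f) x = a *: f x. Proof. by []. Qed.
Lemma secBE f g x : (f - g) x = f x - g x. Proof. by []. Qed.

Definition supported S f := forall x, x \notin S -> f x = 0.

Lemma supported_comb S a f g :
  supported S f -> supported S g -> supported S (a *: f + g).
Proof. by move=> fS gS x xS; rewrite secDE secZE fS ?gS // scaler0 addr0. Qed.

Lemma supported_subset S S' f : (S `<=` S')%fset -> supported S f -> supported S' f.
Proof. by move=> /fsubsetP sub fS x xS'; apply: fS; apply: contra xS'; apply: sub. Qed.

Lemma Gc0 : Gc (0 : sec).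
Proof. by exists fset0. Qed.

Lemma Gc_comb a phi psi : Gc phi -> Gc psi -> Gc (a *: phi + psi).
Proof.
move=> [S phiS] [S' psiS]; exists (S `|` S')%fset => x.
by rewrite inE negb_or => /andP[xS xS']; rewrite secDE secZE phiS ?psiS // scaler0 addr0.
Qed.

Lemma pairingE S phi f : (forall x, x \notin S -> dual_pair (phi x) (f x) = 0) ->
  pairing phi f = \sum_(x <- S) dual_pair (phi x) (f x).
Proof.
move=> out_S; rewrite /pairing (fsbigE (enum_fset S)) ?fset_uniq //.
  by apply: eq_bigl => x; rewrite in_setT.
by move=> x _; apply: out_S.
Qed.

Lemma pairingC phi f : pairing phi f = pairing f phi.
Proof. by apply: eq_fsbigr => x _; rewrite dual_pairC. Qed.

Lemma pairing_supported S phi f : supported S phi ->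
  pairing phi f = \sum_(x <- S) dual_pair (phi x) (f x).
Proof. by move=> phiS; apply: pairingE => x /phiS ->; rewrite dual_pair0l. Qed.

Lemma pairingDl a phi psi f : Gc phi -> Gc psi ->
  pairing (a *: phi + psi) f = a * pairing phi f + pairing psi f.
Proof.
move=> [S phiS] [S' psiS].
have phiT := supported_subset (fsubsetUl S S') phiS.
have psiT := supported_subset (fsubsetUr S S') psiS.
rewrite (pairing_supported _ (supported_comb a phiT psiT)).
rewrite (pairing_supported _ phiT) (pairing_supported _ psiT) mulr_sumr -big_split.
by apply: eq_bigr => x _; rewrite dual_pairDl.
Qed.

Lemma pairingDr a phi f g : Gc phi ->
  pairing phi (a *: f + g) = a * pairing phi f + pairing phi g.
Proof.
move=> [S phiS]; rewrite !(pairing_supported _ phiS) mulr_sumr -big_split.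
by apply: eq_bigr => x _; rewrite !(dual_pairC (phi x)) dual_pairDl.
Qed.

Lemma pairingBr phi f g : Gc phi -> pairing phi (f - g) = pairing phi f - pairing phi g.
Proof. by move=> Gphi; rewrite addrC -scaleN1r pairingDr // mulN1r addrC. Qed.

Lemma pairing0l f : pairing 0 f = 0.
Proof. by rewrite /pairing fsbig1 // => x _; rewrite dual_pair0l. Qed.

Lemma pairing_suml p (d : 'I_p -> R[i]) (z : 'I_p -> sec) f : (forall i, Gc (z i)) ->
  pairing (\sum_i d i *: z i) f = \sum_i d i * pairing (z i) f.
Proof.
move=> Gz; suff [] : Gc (\sum_i d i *: z i) /\
    pairing (\sum_i d i *: z i) f = \sum_i d i * pairing (z i) f by [].
elim/big_rec2: _ => [|i phi t _ [Gphi <-]].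
  by split; [exact: Gc0 | rewrite pairing0l].
by split; [exact: Gc_comb | exact: pairingDl].
Qed.

Lemma pairing_sumr p (b : 'I_p -> R[i]) (t : 'I_p -> sec) phi : Gc phi ->
  pairing phi (\sum_i b i *: t i) = \sum_i b i * pairing phi (t i).
Proof.
move=> Gphi; elim/big_rec2: _ => [|i f c _ <-]; last exact: pairingDr.
by rewrite pairingC pairing0l.
Qed.

Definition delta (x : X) (j : 'I_(n x)) : sec :=
  fun y => \row_(k < n y) ((y == x) && (k == j :> nat))%:R.

Lemma delta_out (x y : X) (j : 'I_(n x)) : y != x -> delta j y = 0.
Proof. by move=> /negbTE yx; apply/rowP => k; rewrite !mxE yx. Qed.

Lemma pairing_delta phi (x : X) (j : 'I_(n x)) : pairing phi (delta j) = phi x 0 j.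
Proof.
rewrite (@pairingE [fset x]%fset) => [|y]; last first.
  by rewrite inE => /delta_out ->; rewrite dual_pairC dual_pair0l.
rewrite big_seq_fset1 /dual_pair (bigD1 j) //= big1 => [|k /negbTE kj].
  by rewrite !mxE !eqxx mulr1 addr0.
by rewrite /delta !mxE eqxx /= -[(k == j :> nat)]/(k == j) kj mulr0.
Qed.

Local Notation index L := {x : L & 'I_(n (fsval x))}.

Definition coords L f : 'rV[R[i]]_#|{: index L}| :=
  \row_k f (fsval (tag (enum_val k))) 0 (tagged (enum_val k)).

Definition of_coords L (c : 'rV[R[i]]_#|{: index L}|) : sec := fun x =>
  \row_(j < n x) \sum_(k < #|{: index L}| |
    (fsval (tag (enum_val k)) == x) && (tagged (enum_val k) == j :> nat)) c 0 k.

Lemma coords_comb L a f g : coords L (a *: f + g) = a *: coords L f + coords L g.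
Proof. by apply/rowP => k; rewrite !mxE. Qed.

Lemma supported_of_coords L (c : 'rV_#|{: index L}|) : supported L (of_coords c).
Proof.
move=> x xL; apply/rowP => j; rewrite !mxE big_pred0 // => k.
by apply/negbTE; apply: contra xL => /andP[/eqP xk _]; rewrite -xk fsvalP.
Qed.

Lemma coords_of_coords L (c : 'rV_#|{: index L}|) : coords L (of_coords c) = c.
Proof.
apply/rowP => k; rewrite !mxE (big_pred1 k) // => k'.
rewrite /= -(inj_eq enum_val_inj); apply/idP/eqP => [|->]; last by rewrite !eqxx.
case: (enum_val k) (enum_val k') => [x j] [y i] /= /andP[/eqP/val_inj eyx /eqP eij].
by subst y; congr existT; apply: val_inj.
Qed.

Lemma eq_on_coords L f g : coords L f = coords L g -> forall x, x \in L -> f x = g x.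
Proof.
move=> /rowP fg x xL; apply/rowP => j.
pose q := Tagged (fun y : L => 'I_(n (fsval y))) (j : 'I_(n (fsval [` xL]%fset))).
have := fg (enum_rank q).
by rewrite !mxE enum_rankK.
Qed.

Lemma pairing_coords L phi f : supported L phi ->
  pairing phi f = dual_pair (coords L phi) (coords L f).
Proof.
move=> phiL; rewrite (pairing_supported _ phiL) /dual_pair big_seq_fsetE /=.
rewrite (sig_big_dep (fun x : L => true) (fun x (j : 'I_(n (fsval x))) => true)
  (fun x (j : 'I_(n (fsval x))) => phi (fsval x) 0 j * f (fsval x) 0 j)) /=.
rewrite [RHS](reindex enum_rank) /=; last exact: onW_bij (@enum_rank_bij _).
by apply: eq_bigr => q _; rewrite !mxE enum_rankK.
Qed.

Lemma pairing_of_coords L (c : 'cV_#|{: index L}|) f :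
  pairing (of_coords c^T) f = (coords L f *m c) 0 0.
Proof.
rewrite (pairing_coords _ (supported_of_coords _)) coords_of_coords.
by rewrite dual_pairC dual_pairE trmxK.
Qed.

End SectionSpace.

Arguments Gc0 {R X n}.

Lemma normc_sum (R : rcfType) (I : Type) (r : seq I) (F : I -> R[i]) :
  Normc.normc (\sum_(i <- r) F i) <= \sum_(i <- r) Normc.normc (F i).
Proof.
elim/big_rec2: _ => [|i z t _ le_zt]; first by rewrite Normc.normc0.
exact: le_trans (le_normcD _ _) (lerD (lexx _) le_zt).
Qed.

Section Seminorms.
Variables (R : realType) (X : countType) (n : X -> nat).
Variable nrm : forall x : X, 'rV[R[i]]_(n x) -> R.
Hypothesis hnrm : forall x, is_norm (@nrm x).
Local Notation sec := (sec R n).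
Local Notation pK := (pK nrm).
Implicit Types (f g phi : sec) (S : {fset X}).

Lemma pK_ge0 S f : 0 <= pK S f.
Proof. by apply: sumr_ge0 => x _; apply: is_norm_ge0. Qed.

Lemma nrm_le_pK S f x : x \in S -> nrm (f x) <= pK S f.
Proof.
move=> xS; rewrite /pK (bigD1_seq x) ?fset_uniq //= lerDl.
by apply: sumr_ge0 => y _; apply: is_norm_ge0.
Qed.

Lemma pK_subset S S' f : (S `<=` S')%fset -> pK S f <= pK S' f.
Proof.
move=> sub; pose F x := if x \in S then nrm (f x) else 0.
rewrite /pK (eq_big_seq F) => [|x xS]; last by rewrite /F xS.
rewrite (big_fset_incl _ sub) => [|x _ /negbTE xS]; last by rewrite /F xS.
by apply: ler_sum => x _; rewrite /F; case: ifP => // _; apply: is_norm_ge0.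
Qed.

Lemma pK_eq0 S f : (forall x, x \in S -> f x = 0) -> pK S f = 0.
Proof.
move=> f0; rewrite /pK big_seq big1 // => x /f0 ->.
by apply: is_norm0.
Qed.

Lemma pKD S f g : pK S (f + g) <= pK S f + pK S g.
Proof.
by rewrite /pK -big_split; apply: ler_sum => x _; case: (hnrm x) => nrmD _ _; apply: nrmD.
Qed.

Lemma pKZ S a f : pK S (a *: f) = Normc.normc a * pK S f.
Proof.
by rewrite /pK mulr_sumr; apply: eq_bigr => x _; case: (hnrm x) => _ nrmZ _; apply: nrmZ.
Qed.

Lemma pK_sum S p (b : 'I_p -> R[i]) (t : 'I_p -> sec) :
  pK S (\sum_i b i *: t i) <= \sum_i Normc.normc (b i) * pK S (t i).
Proof.
elim/big_rec2: _ => [|i g r _ le_gr].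
  by rewrite pK_eq0 // => x _; apply: is_norm0.
by apply: le_trans (pKD _ _ _) _; rewrite pKZ lerD2l.
Qed.

Lemma pairing_le_pK S phi : supported S phi ->
  exists2 B, 0 <= B & forall f, Normc.normc (pairing phi f) <= B * pK S f.
Proof.
move=> phiS.
have /boolp.choice[c c_spec] : forall x, exists c : R, 0 <= c /\
    forall (v : 'rV_(n x)) j, Normc.normc (v 0 j) <= c * nrm v.
  move=> x; have [c c0 le_c] := normc_le_is_norm (hnrm x).
  by exists c; split; [apply: ltW | apply: le_c].
exists (\sum_(x <- S) \sum_j Normc.normc (phi x 0 j) * c x) => [|f].
  apply: sumr_ge0 => x _; apply: sumr_ge0 => j _.
  by rewrite mulr_ge0 ?normc_ge0 //; case: (c_spec x).
rewrite (pairing_supported _ phiS) mulr_suml; apply: le_trans (normc_sum _ _) _.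
rewrite big_seq [leRHS]big_seq; apply: ler_sum => x xS.
rewrite mulr_suml; apply: le_trans (normc_sum _ _) _; apply: ler_sum => j _.
rewrite Normc.normcM -mulrA; apply: ler_wpM2l; first exact: normc_ge0.
have [c0 le_c] := c_spec x; apply: le_trans (le_c _ j) _.
by apply: (ler_wpM2l c0); apply: nrm_le_pK.
Qed.

End Seminorms.

Section Adjoint.
Variables (R : realType) (X : countType) (n : X -> nat).
Local Notation sec := (sec R n).
Local Notation index L := {x : L & 'I_(n (fsval x))}.
Variables (A A' : sec -> sec).
Hypothesis hlin : sec_linear A.
Hypothesis hA'Gc : forall phi, Gc phi -> Gc (A' phi).
Hypothesis hdual : forall phi f, Gc phi -> pairing (A' phi) f = pairing phi (A f).
Hypothesis hinj : forall phi psi, Gc phi -> Gc psi -> A' phi = A' psi -> phi = psi.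
Implicit Types (f g phi psi : sec) (K L : {fset X}).

Lemma adjoint_comb a phi psi : Gc phi -> Gc psi ->
  A' (a *: phi + psi) = a *: A' phi + A' psi.
Proof.
move=> Gphi Gpsi; apply: functional_extensionality_dep => x; apply/rowP => j.
rewrite -(pairing_delta (A' _) j) hdual; last exact: Gc_comb.
by rewrite pairingDl // -!hdual // !pairing_delta !mxE.
Qed.

Lemma adjoint0 : A' 0 = 0.
Proof.
have := adjoint_comb (-1) Gc0 Gc0.
by rewrite scaler0 addr0 scaleN1r addNr.
Qed.

Definition adj_supported K phi := Gc phi /\ supported K (A' phi).

Lemma adj_supported_basis K :
  exists p (z : 'I_p -> sec) (M : 'M_(p, #|{: index K}|)),
  [/\ row_free M, forall i, adj_supported K (z i) /\ coords K (A' (z i)) = row i M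
    & forall phi, adj_supported K phi ->
        exists d : 'rV_p, phi = \sum_i d 0 i *: z i /\ coords K (A' phi) = d *m M].
Proof.
apply: (@inj_subspace_basis _ _ (adj_supported K) _ (fun phi => coords K (A' phi))).
- by split; [exact: Gc0 | rewrite adjoint0].
- move=> a phi psi [Gphi phiK] [Gpsi psiK]; split; first exact: Gc_comb.
  by rewrite adjoint_comb //; apply: supported_comb.
- by move=> a phi psi [Gphi _] [Gpsi _] /=; rewrite adjoint_comb // coords_comb.
move=> phi psi [Gphi phiK] [Gpsi psiK] /= /eq_on_coords eqK; apply: hinj => //.
apply: functional_extensionality_dep => x.
by have [/eqK //|xK] := boolP (x \in K); rewrite phiK ?psiK.
Qed.

Let A_comb a f g : A (a *: f + g) = a *: A f + A g := hlin a f g.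

Lemma local_surjectivity K L y :
  (forall phi, supported L phi -> supported K (A' phi) -> pairing phi y = 0) ->
  exists z, (forall x, x \in K -> z x = 0) /\ forall x, x \in L -> A z x = y x.
Proof.
move=> y_perp.
pose V v := exists z : sec, (forall x, x \in K -> z x = 0) /\ coords L (A z) = v.
have V0 : V 0.
  exists 0; split => //; have := A_comb (-1) 0 0.
  by rewrite scaler0 addr0 scaleN1r addNr => ->; apply/rowP => k; rewrite !mxE.
have V_comb a u v : V u -> V v -> V (a *: u + v).
  move=> [z [zK <-]] [z' [z'K <-]]; exists (a *: z + z'); split.
    by move=> x xK; rewrite secDE secZE zK // z'K // scaler0 addr0.
  by rewrite A_comb coords_comb.
suff [z [zK /eq_on_coords Azy]] : V (coords L y) by exists z.
apply: (@subspace_annihilator _ _ V V0 V_comb) => c c_perp.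
have A'phiK : supported K (A' (of_coords c^T)).
  move=> x xK; apply/rowP => j; rewrite -(pairing_delta (A' _) j) hdual; last first.
    by exists L; apply: supported_of_coords.
  rewrite pairing_of_coords c_perp ?mxE //; exists (delta R j); split => // x' x'K.
  by apply: delta_out; apply: contraNneq xK => <-.
have := y_perp _ (supported_of_coords _) A'phiK; rewrite pairing_of_coords => yc.
by apply/rowP => i; rewrite ord1 yc mxE.
Qed.

Variable nrm : forall x : X, 'rV[R[i]]_(n x) -> R.
Hypothesis hnrm : forall x, is_norm (@nrm x).
Local Notation pK := (pK nrm).

Lemma adjoint_lift K : exists (S : {fset X}) (C : R), 0 <= C /\ forall f, exists f0,
  pK K f0 <= C * pK S f /\
  forall phi, adj_supported K phi -> pairing (A' phi) f0 = pairing phi f.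
Proof.
have [p [z [M [freeM zM span]]]] := adj_supported_basis K.
have [Rm MRm] := row_freeP freeM.
(* [t i] has K-coordinates the [i]-th column of a right inverse of [M], so that
   (A' (z j), t i) is 1 if i = j and 0 otherwise. *)
pose t i : sec := of_coords (col i Rm)^T.
have /boolp.choice[Sz zSz] : forall i, exists S, supported S (z i).
  by move=> i; have [[]] := zM i.
pose S := (\bigcup_(i | true) Sz i)%fset.
have zS i : supported S (z i).
  by apply: supported_subset (zSz i); apply: bigfcup_sup; rewrite ?mem_index_enum.
have /boolp.choice[B zB] : forall i, exists B, 0 <= B /\
    forall f, Normc.normc (pairing (z i) f) <= B * pK S f.
  by move=> i; have [B B0 zB] := pairing_le_pK hnrm (zS i); exists B.
exists S, (\sum_i B i * pK K (t i)); split.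
  by apply: sumr_ge0 => i _; rewrite mulr_ge0 ?pK_ge0 //; case: (zB i).
move=> f; exists (\sum_i pairing (z i) f *: t i); split.
  apply: le_trans (pK_sum hnrm _ _ _) _; rewrite mulr_suml; apply: ler_sum => i _.
  by rewrite mulrAC; apply: ler_wpM2r; [apply: pK_ge0 | case: (zB i)].
move=> phi Wphi; have [d [phiE A'phi]] := span phi Wphi.
rewrite pairing_sumr; last by case: Wphi => Gphi _; apply: hA'Gc.
rewrite [in RHS]phiE pairing_suml; last by move=> i; case: (zM i) => [[]].
apply: eq_bigr => i _; rewrite mulrC; congr (_ * _).
rewrite pairingC pairing_of_coords A'phi colE mulmxA -(mulmxA d) MRm mulmx1.
by rewrite -colE !mxE.
Qed.

Lemma rscale_U_sub_closure_image (x0 : X) K : exists eps : R, 0 < eps /\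
  exists K' : {fset X}, K' != fset0 /\
    sec_rscale eps (U nrm K') `<=` sec_closure nrm (A @` U nrm K).
Proof.
have [S [C [C0 lift]]] := adjoint_lift K.
have eps0 : 0 < (C + 1)^-1 by rewrite invr_gt0 ltr_wpDl.
exists (C + 1)^-1; split => //; exists (x0 |` S)%fset; split.
  by apply/eqP => /(congr1 (fun S' => x0 \in S')); rewrite !inE eqxx.
move=> _ [f Uf ->] O Oopen Of; set eps := (C + 1)^-1 in eps0 Of *.
pose g : sec := eps%:C%C *: f.
have [L [d [d0 Od]]] := Oopen _ Of.
have [f0 [f0K f0A']] := lift g.
have [z [zK Az]] : exists z, (forall x, x \in K -> z x = 0) /\
    forall x, x \in L -> A z x = (g - A f0) x.
  apply: local_surjectivity => phi phiL A'phiK; have Gphi : Gc phi by exists L.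
  by rewrite pairingBr // -hdual // f0A' ?subrr.
exists (A (f0 + z)); split.
  exists (f0 + z) => //; rewrite /U /= (_ : pK K (f0 + z) = pK K f0); last first.
    by apply: eq_big_seq => x xK; rewrite secDE zK // addr0.
  apply: le_trans f0K _; rewrite /g pKZ // normc_real ger0_norm ?(ltW eps0) //.
  have pSf : pK S f <= 1 := le_trans (pK_subset hnrm f (fsubsetUr _ _)) Uf.
  apply: le_trans (ler_wpM2l C0 (ler_piMr (ltW eps0) pSf)) _.
  by rewrite ler_pdivrMr ?mul1r ?lerDl // ltr_wpDl.
have Aadd : A (f0 + z) = A f0 + A z by rewrite -[f0]scale1r A_comb !scale1r.
apply: Od; rewrite pK_eq0 // => x xL.
by rewrite /sec_sub Aadd secDE Az // secBE addrCA subrr addr0 subrr.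
Qed.

End Adjoint.

Theorem lemma3p1 (R : realType) (X : countType) (x0 : X) (n : X -> nat)
  (nrm : forall x : X, 'rV[R[i]]_(n x) -> R)
  (hnrm : forall x : X, is_norm (nrm x))
  (A : sec R n -> sec R n)
  (hlin : sec_linear A)
  (hcont : sec_continuous nrm A)
  (A' : sec R n -> sec R n)
  (hA'Gc : forall phi, Gc phi -> Gc (A' phi))
  (hdual : forall phi f, Gc phi -> pairing (A' phi) f = pairing phi (A f))
  (hinj : forall phi psi, Gc phi -> Gc psi -> A' phi = A' psi -> phi = psi) :
  forall K : {fset X}, K != fset0 ->
    exists eps : R, 0 < eps /\
      exists K' : {fset X}, K' != fset0 /\
        sec_rscale eps (U nrm K') `<=` sec_closure nrm (A @` U nrm K).
Proof.
move=> K _.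
exact: (rscale_U_sub_closure_image hlin hA'Gc hdual hinj hnrm x0 K).
Qed.
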